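(* Let $G$ be a graph with a valid edge partition, and let $V_1,V_2$ be the associated vertex partition. Suppose that $\sum_{u\in V_i}\deg u$ is odd for $i=1,2$ and that $G$ has an odd number of vertices. Then the number of cycles compatible with the edge partition is odd.
   Context: A spanning 2-forest is a spanning forest with exactly two trees (a tree may be a single vertex). A valid edge partition of a graph is a bipartition of its edge set such that one part is the edge set of a spanning tree and the other part is the edge set of a spanning 2-forest. The associated vertex partition $V_1,V_2$ consists of the vertex sets of the two trees of the 2-forest. A cycle $C$ is compatible with the valid edge partition if all vertices of $C$ lie in the same part of the vertex partition and exactly one edge of $C$ lies in the spanning-tree part. Degrees are taken in $G$. *)

(* A finite simple graph on vertex type T is given by its
   edge set E : {set {set T}}, each edge being a 2-element vertex set. *)
From mathcomp Require Import all_boot.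
Set Implicit Arguments. Unset Strict Implicit. Unset Printing Implicit Defensive.

Section Graphs.
Variable T : finType.
Implicit Types (E F C : {set {set T}}) (V : {set T}).

Definition simple_graph E : bool := [forall e in E, #|e| == 2].

Definition adj F : rel T := fun x y => [set x; y] \in F.

Definition deg E (u : T) : nat := #|[set e in E | u \in e]|.

Definition verts C : {set T} := [set x | [exists e in C, x \in e]].

Definition is_cycle C : bool :=
  [&& C != set0,
      [forall x in verts C, #|[set e in C | x \in e]| == 2] &
      [forall x in verts C, forall y in verts C, connect (adj C) x y]].

Definition is_forest F : bool := [forall C : {set {set T}}, (C \subset F) ==> ~~ is_cycle C].

Definition spanning_tree F : bool :=
  is_forest F && [forall x, forall y, connect (adj F) x y].

Definition spanning_2forest_parts F V : bool :=
  [&& is_forest F, V != set0, ~: V != set0 &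
      [forall x, forall y, connect (adj F) x y == ((x \in V) == (y \in V))]].

Definition valid_edge_partition E Ft Ff : bool :=
  [&& Ft :|: Ff == E, [disjoint Ft & Ff], spanning_tree Ft &
      [exists V, spanning_2forest_parts Ff V]].

Definition compatible_cycle E Ft V C : bool :=
  [&& C \subset E, is_cycle C,
      (verts C \subset V) || (verts C \subset ~: V) &
      #|C :&: Ft| == 1].

End Graphs.

From mathcomp Require Import all_boot zify.

(* Every edge crossing the bipartition (V1, ~: V1) lies in the spanning tree
   Ft, because each tree of the 2-forest Ff spans one part; by double counting
   their number has the parity of the degree sum over V1, hence is odd. The
   tree has #|T| - 1 edges, an even number, so the number of tree edges inside
   a part is odd. Such an edge f closes a unique cycle with Ff (its fundamental
   cycle), which stays in one part and meets Ft only in f; conversely every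
   compatible cycle is the fundamental cycle of its unique tree edge. *)

Set Implicit Arguments. Unset Strict Implicit. Unset Printing Implicit Defensive.

Section Graphs.
Variable T : finType.
Implicit Types (E F C D : {set {set T}}) (V : {set T}) (x y : T).

Lemma simple_graphP E : reflect {in E, forall e : {set T}, #|e| = 2} (simple_graph E).
Proof. by apply: (iffP forall_inP) => h e /h /eqP. Qed.

Lemma simple_graphS E F : F \subset E -> simple_graph E -> simple_graph F.
Proof.
move=> sFE /simple_graphP simE; apply/simple_graphP => e eF.
exact/simE/(subsetP sFE).
Qed.

Lemma simple_graph_pair E e : simple_graph E -> e \in E ->
  exists x y, x != y /\ e = [set x; y].
Proof. by move=> /simple_graphP simE /simE/eqP/cards2P. Qed.

Lemma simple_graph_edge E e x : simple_graph E -> e \in E -> x \in e ->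
  exists2 y, y != x & e = [set x; y].
Proof.
move=> simE /(simple_graph_pair simE)[a [b [ab ->]]].
rewrite !inE => /orP[]/eqP->; first by exists b; rewrite // eq_sym.
by exists a; rewrite // setUC.
Qed.

Lemma adj_sym F : symmetric (adj F).
Proof. by move=> x y; rewrite /adj setUC. Qed.

Lemma connect_adjC F x y : connect (adj F) x y = connect (adj F) y x.
Proof. exact: (sym_connect_sym (adj_sym F)). Qed.

Lemma subrel_adj F F' : F \subset F' -> subrel (adj F) (adj F').
Proof. by move=> sFF' x y /(subsetP sFF'). Qed.

Lemma connect_adjS F F' x y :
  F \subset F' -> connect (adj F) x y -> connect (adj F') x y.
Proof. by move=> sFF'; apply: connect_sub => a b /(subrel_adj sFF')/connect1. Qed.

Lemma connect_adj0 x y : connect (adj set0) x y = (x == y).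
Proof.
apply/idP/eqP => [|->]; last exact: connect0.
by case/connectP => -[|z p] /=; [move=> _ -> | rewrite /adj inE].
Qed.

(** * Cycles *)

Lemma deg_notin_verts C v : v \notin verts C -> deg C v = 0.
Proof.
move=> vC; apply/eqP; rewrite cards_eq0; apply/eqP/setP => e; rewrite !inE.
apply/negbTE; apply: contra vC => /andP[eC ve].
by rewrite inE; apply/existsP; exists e; rewrite eC.
Qed.

Lemma deg_cycle C v : is_cycle C -> deg C v = 0 \/ deg C v = 2.
Proof.
case/and3P => _ /forall_inP deg2 _.
by have [/deg2/eqP|/deg_notin_verts] := boolP (v \in verts C); [right | left].
Qed.

Definition cycle_edges (c : seq T) : {set {set T}} :=
  [set [set v; next c v] | v in c].

Lemma verts_cycle_edges (c : seq T) : verts (cycle_edges c) = [set v | v \in c].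
Proof.
apply/setP => x; rewrite !inE; apply/existsP/idP => [[e]|xc].
  case/andP=> /imsetP[v vc ->]; rewrite !inE => /orP[]/eqP-> //.
  by rewrite mem_next.
by exists [set x; next c x]; rewrite !inE eqxx andbT; apply/imsetP; exists x.
Qed.

Lemma cycle_edges_sub F (c : seq T) : cycle (adj F) c -> cycle_edges c \subset F.
Proof. by move=> cy; apply/subsetP => e /imsetP[v vc ->]; apply: next_cycle cy vc. Qed.

Lemma prev_at_mem x y (s : seq T) : x \notin s -> prev_at x x y s \in y :: s.
Proof.
elim: s y => [|z s IH] y /=; first by rewrite eqxx inE eqxx.
rewrite inE negb_or => /andP[xz xs]; rewrite (negbTE xz).
by rewrite inE (IH z xs) orbT.
Qed.

Lemma next_prev_neq (c : seq T) v : uniq c -> 2 < size c -> v \in c ->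
  next c v != v /\ next c v != prev c v.
Proof.
move=> uc sz vc; case: (rot_to vc) => i s rot_c.
have := rot_uniq i c; rewrite uc rot_c => uvs.
rewrite -(next_rot i uc) -(prev_rot i uc) rot_c.
have {sz} : 1 < size s by move: sz; rewrite -(size_rot i) rot_c.
case: s {rot_c} uvs => [|a [|b s]] //= + _; rewrite !inE !negb_or.
case/andP=> /and3P[va vb vs] /andP[/andP[ab a_s] /andP[bs _]].
rewrite eqxx (negbTE va) (negbTE vb) eq_sym va.
have := prev_at_mem b vs; rewrite inE => prev_in; split=> //.
by apply: contraTneq prev_in => <-; rewrite negb_or ab.
Qed.

Lemma deg_cycle_edges (c : seq T) v : uniq c -> 2 < size c -> v \in c ->
  deg (cycle_edges c) v = 2.
Proof.
move=> uc sz vc; have [nv np] := next_prev_neq uc sz vc; rewrite /deg.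
have -> : [set e in cycle_edges c | v \in e] =
          [set [set v; next c v]; [set prev c v; v]].
  apply/setP => e; rewrite !inE; apply/andP/orP => [[/imsetP[u _ ->]]|].
    rewrite !inE => /orP[]/eqP->; first by left.
    by right; rewrite (prev_next uc) setUC.
  case=> /eqP->; rewrite !inE eqxx ?orbT; split=> //; apply/imsetP.
    by exists v.
  by exists (prev c v); rewrite ?mem_prev // (next_prev uc) setUC.
rewrite cards2; case: eqP => // /setP/(_ (next c v)).
by rewrite !inE eqxx orbT (negbTE nv) (negbTE np).
Qed.

Lemma cycle_edges_is_cycle (c : seq T) : uniq c -> 2 < size c ->
  is_cycle (cycle_edges c).
Proof.
move=> uc sz; have cy : cycle (adj (cycle_edges c)) c.
  by apply: (cycle_from_next uc) => x xc; apply/imsetP; exists x.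
apply/and3P; split.
- case: c {cy} uc sz => // x c _ _; apply/set0Pn; exists [set x; next (x :: c) x].
  by apply/imsetP; exists x; rewrite ?inE ?eqxx.
- apply/forall_inP => x; rewrite verts_cycle_edges inE => xc.
  exact/eqP/deg_cycle_edges.
case: c uc sz cy => [|x0 c] //= _ _ x0_path.
have x0_to z : z \in x0 :: c -> connect (adj (cycle_edges (x0 :: c))) x0 z.
  move=> zc; apply: (path_connect x0_path).
  by rewrite -rcons_cons mem_rcons inE zc orbT.
apply/forall_inP => x; rewrite verts_cycle_edges inE => /x0_to x0x.
apply/forall_inP => y; rewrite inE => /x0_to x0y.
by apply: connect_trans x0y; rewrite connect_adjC.
Qed.

Lemma close_path_cycle F x y : x != y -> [set x; y] \notin F ->
  connect (adj F) x y ->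
  exists2 C : {set {set T}}, C \subset [set x; y] |: F &
    is_cycle C && (verts C \subset [set v | connect (adj F) x v]).
Proof.
move=> xy xyF /connectP[p path_p]; case/shortenP: path_p => p' path_p' up' _ ly.
subst y; have sz : 2 < size (x :: p').
  case: p' path_p' up' xy xyF => [|z [|w q]] //=; first by rewrite eqxx.
  by rewrite /adj andbT => ->.
exists (cycle_edges (x :: p')).
  apply: cycle_edges_sub; rewrite /= rcons_path; apply/andP; split.
    by apply: sub_path path_p'; apply: subrel_adj; apply: subsetUr.
  by rewrite /adj setUC setU11.
rewrite cycle_edges_is_cycle //; apply/subsetP => v.
rewrite verts_cycle_edges !inE; exact: (path_connect path_p').
Qed.

Lemma adj_verts F x y : adj F x y -> x \in verts F.
Proof.
by move=> xyF; rewrite inE; apply/existsP; exists [set x; y]; rewrite setU11 andbT.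
Qed.

Lemma other_neighbour D z u : simple_graph D -> 1 < deg D z ->
  exists w, [/\ w != z, w != u & adj D z w].
Proof.
move=> simD /card_gt1P[e1 [e2 []]]; rewrite !inE.
case/andP=> e1D /(simple_graph_edge simD e1D)[w1 w1z def_e1].
case/andP=> e2D /(simple_graph_edge simD e2D)[w2 w2z def_e2] e12; subst e1 e2.
have [w1u|] := eqVneq w1 u; last by exists w1.
by exists w2; split=> //; apply: contraNneq e12 => ->; rewrite w1u.
Qed.

Definition min_deg2 D := {in verts D, forall v, 1 < deg D v}.

Lemma extend_path_or_cycle D z r : simple_graph D -> min_deg2 D ->
  z \in verts D -> uniq (z :: r) -> path (adj D) z r ->
  (exists2 C : {set {set T}}, C \subset D & is_cycle C) \/
  exists2 w, w \notin z :: r & adj D w z.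
Proof.
move=> simD degD zD uzr path_zr.
have [w [wz wr1 zw]] := other_neighbour (head z r) simD (degD z zD).
have [wr|wr] := boolP (w \in r); last first.
  by right; exists w; rewrite 1?adj_sym // inE negb_or wz.
left; case/splitPr: wr uzr path_zr wr1 => r1 r2.
rewrite -cat_rcons -cat_cons cat_uniq cat_path => /andP[uc _] /andP[path_c _] wr1.
exists (cycle_edges (z :: rcons r1 w)).
  by apply: cycle_edges_sub; rewrite /= rcons_path path_c last_rcons adj_sym.
apply: cycle_edges_is_cycle => //.
by case: r1 wr1 {uc path_c} => [|a r1] /=; rewrite ?eqxx // size_rcons.
Qed.

Lemma min_deg2_cycle D : simple_graph D -> min_deg2 D -> D != set0 ->
  exists2 C : {set {set T}}, C \subset D & is_cycle C.
Proof.
move=> simD degD /set0Pn[e eD].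
have [x xD] : exists x, x \in verts D.
  have [z [y [_ def_e]]] := simple_graph_pair simD eD.
  by exists z; rewrite inE; apply/existsP; exists e; rewrite eD def_e setU11.
(* A simple path can be extended at its head until it closes a cycle, since it
   has at most #|T| vertices. *)
suff grow n z r : #|T| - size r <= n -> z \in verts D -> uniq (z :: r) ->
    path (adj D) z r -> exists2 C : {set {set T}}, C \subset D & is_cycle C.
  exact: (grow _ x [::]).
elim: n z r {e eD x xD} => [|n IHn] z r bound zD uzr path_zr;
  case: (extend_path_or_cycle simD degD zD uzr path_zr) => // -[w wzr wz].
  move: bound; rewrite leqn0 subn_eq0.
  move=> /(leq_trans (max_card (mem (w :: z :: r)))).
  by rewrite (card_uniqP _) /= ?wzr // => /ltnW; rewrite ltnn.
apply: (IHn w (z :: r)) => /=; first by rewrite subnS -subn1 leq_subLR add1n.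
- exact: adj_verts wz.
- by rewrite wzr.
- by rewrite wz.
Qed.

Lemma is_forestS F F' : F \subset F' -> is_forest F' -> is_forest F.
Proof.
move=> sFF' /forallP forestF'; apply/forallP => C; apply/implyP => sCF.
by have /implyP := forestF' C; apply; apply: subset_trans sFF'.
Qed.

Lemma forest_cycle_edge F e C : is_forest F -> is_cycle C -> C \subset e |: F ->
  e \in C.
Proof.
move=> /forallP/(_ C)/implyP forestF cycC sCeF; apply: contraT => eC.
suff /forestF : C \subset F by rewrite cycC.
apply/subsetP => f fC.
by have := subsetP sCeF f fC; rewrite !inE; case: eqP fC eC => // -> ->.
Qed.

Lemma min_deg2_symdiff C1 C2 : is_cycle C1 -> is_cycle C2 ->
  min_deg2 ((C1 :\: C2) :|: (C2 :\: C1)).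
Proof.
move=> cyc1 cyc2 v; rewrite inE => /existsP[e /andP[eD ve]].
set A1 := [set f in C1 | v \in f]; set A2 := [set f in C2 | v \in f].
have def_deg : deg ((C1 :\: C2) :|: (C2 :\: C1)) v = #|A1 :\: A2| + #|A2 :\: A1|.
  rewrite /deg; have -> : [set f in (C1 :\: C2) :|: (C2 :\: C1) | v \in f] =
                          (A1 :\: A2) :|: (A2 :\: A1).
    by apply/setP => f; rewrite !inE; do 3!case: (_ \in _).
  rewrite cardsU; suff -> : (A1 :\: A2) :&: (A2 :\: A1) = set0 by rewrite cards0 subn0.
  by apply/setP => f; rewrite !inE; do 3!case: (_ \in _).
have : 0 < deg ((C1 :\: C2) :|: (C2 :\: C1)) v.
  by apply/card_gt0P; exists e; rewrite inE eD.
rewrite def_deg; have := cardsID A2 A1; have := cardsID A1 A2; rewrite setIC.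
by have := deg_cycle v cyc1; have := deg_cycle v cyc2; rewrite /deg -/A1 -/A2; lia.
Qed.

Lemma forest_unique_cycle F e C1 C2 : simple_graph (e |: F) -> is_forest F ->
  is_cycle C1 -> is_cycle C2 -> C1 \subset e |: F -> C2 \subset e |: F -> C1 = C2.
Proof.
move=> simeF forestF cyc1 cyc2 sC1 sC2; apply/eqP; apply: contraT => C12.
(* Both cycles pass through e, so their symmetric difference is a nonempty
   subgraph of F of minimum degree 2, which contains a cycle. *)
have eC1 := forest_cycle_edge forestF cyc1 sC1.
have eC2 := forest_cycle_edge forestF cyc2 sC2.
set D := (C1 :\: C2) :|: (C2 :\: C1).
have sDF : D \subset F.
  apply/subsetP => f; rewrite !inE => /orP[] /andP[fC fC'].
    by have := subsetP sC1 f fC'; rewrite !inE; case: eqP fC => // ->; rewrite eC2.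
  by have := subsetP sC2 f fC'; rewrite !inE; case: eqP fC => // ->; rewrite eC1.
have D0 : D != set0.
  apply: contra C12; rewrite setU_eq0 !setD_eq0 => /andP[s12 s21].
  by rewrite eqEsubset s12 s21.
have simD : simple_graph D.
  by apply: simple_graphS simeF; apply: subset_trans sDF (subsetUr _ _).
have [C sCD cycC] := min_deg2_cycle simD (min_deg2_symdiff cyc1 cyc2) D0.
by have /forallP/(_ C) := forestF; rewrite (subset_trans sCD sDF) cycC.
Qed.

(** * Components and forests *)

Definition component F x : {set T} := [set y | connect (adj F) x y].

Definition components F : {set {set T}} := [set component F x | x : T].

Lemma component_refl F x : x \in component F x.
Proof. by rewrite inE connect0. Qed.

Lemma component_eq F x y : connect (adj F) x y -> component F x = component F y.
Proof.
move=> xy; apply/setP => z; rewrite !inE; apply/idP/idP; last exact: connect_trans.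
by apply: connect_trans; rewrite connect_adjC.
Qed.

Lemma mem_component F x z : (z \in component F x) = (component F z == component F x).
Proof.
apply/idP/eqP => [xz | <-]; last exact: component_refl.
by rewrite inE in xz; rewrite (component_eq xz).
Qed.

Lemma component_setU1 F x y z :
  let N := component F x :|: component F y in
  component ([set x; y] |: F) z = if z \in N then N else component F z.
Proof.
move=> N; set F' := [set x; y] |: F.
set f := fun z => if z \in N then N else component F z.
have memN u v : connect (adj F) u v -> (u \in N) = (v \in N).
  move=> uv; have wu_wv w : connect (adj F) w u = connect (adj F) w v.
    by apply/idP/idP => wu; apply: connect_trans wu _; rewrite // connect_adjC.
  by rewrite !inE !wu_wv.
have f_edge u v : adj F' u v -> f u = f v.
  rewrite /adj !inE => /orP[/eqP uv | uvF].
    have Nxy w : w \in [set x; y] -> w \in N.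
      by rewrite !inE => /orP[]/eqP->; rewrite connect0 ?orbT.
    by rewrite /f !Nxy // -uv !inE eqxx ?orbT.
  have uv : connect (adj F) u v by apply: connect1.
  by rewrite /f (memN _ _ uv) (component_eq uv).
have N_conn u v : u \in N -> v \in N -> connect (adj F') u v.
  suff Nx w : w \in N -> connect (adj F') x w.
    by move=> /Nx xu /Nx; apply: connect_trans; rewrite connect_adjC.
  rewrite !inE => /orP[] /(connect_adjS (subsetU1 [set x; y] F)) // yw.
  by apply: connect_trans _ yw; apply: connect1; rewrite /adj setU11.
apply/setP => v; rewrite -/(f z) inE; apply/idP/idP.
  case/connectP => p path_p ->; elim: p z path_p => [|w p IHp] u /=.
    by rewrite /f; case: ifP; rewrite ?component_refl.
  by case/andP => /f_edge ->; apply: IHp.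
rewrite /f; case: ifP => [zN vN | _]; first exact: N_conn.
by rewrite inE; apply: connect_adjS; apply: subsetUr.
Qed.

Lemma card_components_setU1 F x y : ~~ connect (adj F) x y ->
  #|components ([set x; y] |: F)| + 1 = #|components F|.
Proof.
move=> nxy; set Cx := component F x; set Cy := component F y; set N := Cx :|: Cy.
have CxCy : Cx != Cy.
  by apply: contraNneq nxy => CxCy; have := component_refl F y; rewrite -/Cy -CxCy inE.
have memN z : (z \in N) = (component F z \in [set Cx; Cy]).
  by rewrite in_setU in_set2 !mem_component.
have -> : components ([set x; y] |: F) = N |: (components F :\: [set Cx; Cy]).
  apply/setP => K; rewrite in_setU1 in_setD; apply/imsetP/idP => [[z _ ->]|].
    rewrite component_setU1 -/N; case: ifP => [_|zN]; first by rewrite eqxx.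
    by apply/orP; right; rewrite -memN zN; apply/imsetP; exists z.
  case/orP => [/eqP-> | /andP[nK /imsetP[z _ defK]]].
    by exists x; rewrite // component_setU1 -/N memN setU11.
  exists z => //; rewrite component_setU1 -/N memN -defK.
  by rewrite (negbTE nK).
have sub2 : [set Cx; Cy] \subset components F.
  by apply/subsetP => K; rewrite in_set2 => /orP[]/eqP->; apply: imset_f.
have NS : N \notin components F :\: [set Cx; Cy].
  apply/negP; rewrite in_setD => /andP[nN /imsetP[z _ defN]].
  have : x \in component F z by rewrite -defN in_setU component_refl.
  by rewrite mem_component => /eqP Cxz; rewrite defN -Cxz in_set2 eqxx in nN.
rewrite cardsU1 NS cardsD (setIidPr sub2) cards2 CxCy.
by have := subset_leq_card sub2; rewrite cards2 CxCy /=; move: #|_| => n; lia.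
Qed.

Lemma components0 : components set0 = [set [set x] | x : T].
Proof.
apply: eq_imset => x; apply/setP => y.
by rewrite !inE connect_adj0 eq_sym.
Qed.

Lemma forest_card F : simple_graph F -> is_forest F ->
  #|F| + #|components F| = #|T|.
Proof.
have [n] := ubnP #|F|; elim: n F => // n IHn F szF simF forestF.
have [-> | [e eF]] := set_0Vmem F.
  by rewrite cards0 components0 card_imset //; apply: set1_inj.
have [x [y [xy def_e]]] := simple_graph_pair simF eF.
set F0 := F :\ e; have sF0F : F0 \subset F := subsetDl F [set e].
have defF : F = [set x; y] |: F0 by rewrite -def_e setD1K.
have nxy : ~~ connect (adj F0) x y.
  apply/negP => /(close_path_cycle xy)[]; first by rewrite -def_e setD11.
  move=> C; rewrite -defF => sCF /andP[cycC _].
  by have /forallP/(_ C) := forestF; rewrite sCF cycC.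
have szF0 : #|F0| < n by move: szF; rewrite (cardsD1 e F) eF.
have := IHn F0 szF0 (simple_graphS sF0F simF) (is_forestS sF0F forestF).
have := card_components_setU1 nxy; rewrite -defF (cardsD1 e F) eF /= -/F0.
lia.
Qed.

Lemma spanning_tree_card F : simple_graph F -> spanning_tree F -> 0 < #|T| ->
  #|F|.+1 = #|T|.
Proof.
move=> simF /andP[forestF /forallP connF] /card_gt0P[x0 _].
have compT x : component F x = setT.
  by apply/setP => y; rewrite !inE; apply/forallP: y; apply: connF.
have compsT : components F = [set setT].
  apply/setP => K; rewrite inE.
  by apply/imsetP/eqP => [[x _ ->] | ->]; [|exists x0].
by have := forest_card simF forestF; rewrite compsT cards1 addn1.
Qed.

(** * Degree parity *)

Lemma sum_nat_of_bool (I : finType) (A : {pred I}) (P : pred I) :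
  \sum_(i in A) (P i : nat) = #|[set i in A | P i]|.
Proof. by rewrite -sum1dep_card big_mkcondr; apply: eq_bigr => i _; case: (P i). Qed.

Lemma sum_deg E V : \sum_(u in V) deg E u = \sum_(e in E) #|e :&: V|.
Proof.
under eq_bigr do rewrite /deg -sum_nat_of_bool.
rewrite exchange_big; apply: eq_bigr => e _; rewrite sum_nat_of_bool.
by apply: eq_card => u; rewrite !inE andbC.
Qed.

Definition crossing V (e : {set T}) : bool := #|e :&: V| == 1.

Lemma odd_sum_deg E V : simple_graph E ->
  odd (\sum_(u in V) deg E u) = odd #|[set e in E | crossing V e]|.
Proof.
move=> /simple_graphP simE; rewrite sum_deg -sum_nat_of_bool.
rewrite (eq_bigr (fun e => crossing V e + 2 * (#|e :&: V| == 2))) => [|e eE].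
  by rewrite big_split -big_distrr /= oddD oddM addbF.
have : #|e :&: V| <= 2 by rewrite -(simE e eE) subset_leq_card // subsetIl.
by rewrite /crossing; case: #|_| => [|[|[|]]].
Qed.

Definition in_one_part V (A : {set T}) : bool := (A \subset V) || (A \subset ~: V).

Lemma in_one_partP V (A : {set T}) x : x \in A ->
  reflect {in A, forall y, (y \in V) = (x \in V)} (in_one_part V A).
Proof.
move=> xA; apply: (iffP orP) => [[] /subsetP sAV y yA | sameA].
- by rewrite !sAV.
- by move: (sAV y yA) (sAV x xA); rewrite !inE => /negbTE-> /negbTE->.
case xV : (x \in V); [left | right]; apply/subsetP => y /sameA.
  by rewrite xV.
by rewrite inE xV => ->.
Qed.

Lemma in_one_part_crossing V (e : {set T}) : #|e| = 2 ->
  in_one_part V e = ~~ crossing V e.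
Proof.
move=> e2; have := cardsID V e; rewrite e2 /in_one_part /crossing.
rewrite -setD_eq0 -cards_eq0 subsets_disjoint -setI_eq0 setCK -cards_eq0.
by case: #|e :&: V| => [|[|[|]]]; case: #|e :\: V| => [|[|[|]]].
Qed.

End Graphs.

Section CompatibleCycles.
Variables (T : finType) (E Ft Ff : {set {set T}}) (V : {set T}).
Hypotheses (simE : simple_graph E) (partE : Ft :|: Ff = E).
Hypotheses (disjF : [disjoint Ft & Ff]) (forestFf : is_forest Ff).
Hypothesis sides : forall x y, connect (adj Ff) x y = ((x \in V) == (y \in V)).

Let sFtE : Ft \subset E. Proof. by rewrite -partE subsetUl. Qed.
Let sFfE : Ff \subset E. Proof. by rewrite -partE subsetUr. Qed.

Lemma forest_edge_in_one_part f : f \in Ff -> in_one_part V f.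
Proof.
have simFf := simple_graphS sFfE simE.
move=> fFf; have [x [y [_ def_f]]] := simple_graph_pair simFf fFf.
apply/(in_one_partP V (_ : x \in f)); first by rewrite def_f setU11.
move=> z; rewrite def_f !inE => /orP[]/eqP-> //.
by apply/esym/eqP; rewrite -sides; apply: connect1; rewrite /adj -def_f.
Qed.

Lemma card_tree_edges :
  #|Ft| = #|[set f in Ft | in_one_part V f]| + #|[set e in E | crossing V e]|.
Proof.
rewrite -(cardsID [set f | in_one_part V f] Ft) setIdE; congr (_ + _).
apply: eq_card => e; rewrite !inE; apply/andP/andP => [[oneE eFt] | [eE crossE]].
  have eE := subsetP sFtE e eFt.
  by rewrite in_one_part_crossing ?negbK in oneE; last by apply/simple_graphP: eE.
have oneE : ~~ in_one_part V e.
  by rewrite in_one_part_crossing ?crossE //; apply/simple_graphP: eE.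
split=> //; move: eE; rewrite -partE inE => /orP[] // /forest_edge_in_one_part.
by rewrite (negbTE oneE).
Qed.

Lemma compatible_cycle_of_tree_edge f : f \in Ft -> in_one_part V f ->
  exists2 C, compatible_cycle E Ft V C & C :&: Ft = [set f].
Proof.
have simFt := simple_graphS sFtE simE.
move=> fFt oneF; have [x [y [xy def_f]]] := simple_graph_pair simFt fFt.
have xf : x \in f by rewrite def_f setU11.
have cxy : connect (adj Ff) x y.
  by rewrite sides (in_one_partP V xf oneF) // def_f !inE eqxx orbT.
have xyFf : [set x; y] \notin Ff by rewrite -def_f (disjointFr disjF fFt).
have [C] := close_path_cycle xy xyFf cxy.
rewrite -def_f => sCfFf /andP[cycC vertsC].
have fC : f \in C := forest_cycle_edge forestFf cycC sCfFf.
have CFt : C :&: Ft = [set f].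
  apply/setP => g; rewrite !inE; apply/andP/eqP => [[gC gFt] | ->] //.
  have := subsetP sCfFf g gC; rewrite !inE (disjointFr disjF gFt) orbF.
  exact/eqP.
exists C => //; apply/and4P; split=> //; last by rewrite CFt cards1.
  apply: subset_trans sCfFf _; apply/subsetP => g; rewrite !inE.
  by case/orP => [/eqP-> | /(subsetP sFfE)]; first exact: subsetP sFtE f fFt.
have xC : x \in verts C by rewrite inE; apply/existsP; exists f; rewrite fC.
apply/(in_one_partP V xC) => v /(subsetP vertsC); rewrite inE sides.
by move/eqP.
Qed.

Lemma compatible_cycle_sub C f : compatible_cycle E Ft V C ->
  C :&: Ft = [set f] -> C \subset f |: Ff.
Proof.
case/and4P=> sCE _ _ _ CFt; apply/subsetP => g gC; rewrite !inE.
have := subsetP sCE g gC; rewrite -partE inE => /orP[gFt | ->]; last exact: orbT.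
have : g \in C :&: Ft by rewrite inE gC gFt.
by rewrite CFt inE => ->.
Qed.

Lemma compatible_cycle_unique C C' f :
  compatible_cycle E Ft V C -> compatible_cycle E Ft V C' ->
  C :&: Ft = [set f] -> C' :&: Ft = [set f] -> C = C'.
Proof.
move=> compC compC' CFt C'Ft.
have fFt : f \in Ft by have := set11 f; rewrite -CFt inE => /andP[].
have simfFf : simple_graph (f |: Ff).
  by apply: simple_graphS simE; rewrite -partE; apply: setSU; rewrite sub1set.
apply: (forest_unique_cycle simfFf forestFf).
- by case/and4P: compC.
- by case/and4P: compC'.
- exact: compatible_cycle_sub CFt.
- exact: compatible_cycle_sub C'Ft.
Qed.

Lemma compatible_cycle_tree_edge C : compatible_cycle E Ft V C ->
  exists2 f, f \in [set f in Ft | in_one_part V f] & C :&: Ft = [set f].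
Proof.
move=> compC; case/and4P: (compC) => _ _ oneC /cards1P[f CFt]; exists f => //.
have /setIP[fC fFt] : f \in C :&: Ft by rewrite CFt set11.
have [x xf] : exists x, x \in f.
  by apply/set0Pn; rewrite -card_gt0 (simple_graphP _ simE) ?(subsetP sFtE).
have xC : x \in verts C by rewrite inE; apply/existsP; exists f; rewrite fC.
rewrite inE fFt; apply/(in_one_partP V xf) => y yf.
apply: (in_one_partP V xC oneC); rewrite inE; apply/existsP; exists f; by rewrite fC.
Qed.

Lemma card_compatible_cycles :
  #|[set C | compatible_cycle E Ft V C]| = #|[set f in Ft | in_one_part V f]|.
Proof.
pose tree_edge C := odflt set0 [pick f in C :&: Ft].
have tree_edgeE C f : C :&: Ft = [set f] -> tree_edge C = f.
  by rewrite /tree_edge => ->; rewrite pick_set1.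
have -> : [set f in Ft | in_one_part V f] =
          tree_edge @: [set C | compatible_cycle E Ft V C].
  apply/setP => f; apply/idP/imsetP => [fM | [C compC ->]].
    move: (fM); rewrite inE => /andP[fFt oneF].
    have [C compC CFt] := compatible_cycle_of_tree_edge fFt oneF.
    by exists C; rewrite ?inE ?(tree_edgeE _ _ CFt).
  rewrite !inE in compC *.
  by case: (compatible_cycle_tree_edge compC) => g + /tree_edgeE ->; rewrite inE.
apply/esym/card_in_imset => C C'; rewrite !inE => compC compC'.
have [f _ CFt] := compatible_cycle_tree_edge compC.
have [f' _ C'Ft] := compatible_cycle_tree_edge compC'.
rewrite (tree_edgeE _ _ CFt) (tree_edgeE _ _ C'Ft) => ff'.
by rewrite ff' in CFt; apply: compatible_cycle_unique C'Ft.
Qed.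

End CompatibleCycles.

Theorem lemma5p3 (T : finType) (E Ft Ff : {set {set T}}) (V1 : {set T}) :
  simple_graph E ->
  valid_edge_partition E Ft Ff ->
  spanning_2forest_parts Ff V1 ->
  odd (\sum_(u in V1) deg E u) ->
  odd (\sum_(u in ~: V1) deg E u) ->
  odd #|T| ->
  odd #|[set C : {set {set T}} | compatible_cycle E Ft V1 C]|.
Proof.
move=> simE /and4P[/eqP partE disjF treeFt _] /and4P[forestFf _ _ /forallP partsFf].
move=> oddV1 _ oddT.
have sides x y : connect (adj Ff) x y = ((x \in V1) == (y \in V1)).
  by apply/eqP; move/forallP: (partsFf x); apply.
have simFt : simple_graph Ft by apply: simple_graphS simE; rewrite -partE subsetUl.
have cardFt := spanning_tree_card simFt treeFt (odd_gt0 oddT).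
rewrite (card_compatible_cycles simE partE disjF forestFf sides).
move: oddT; rewrite -cardFt.
rewrite (card_tree_edges simE partE sides) oddS oddD -odd_sum_deg //.
by rewrite oddV1 addbT negbK.
Qed.
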